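(* Let $j,\ell\in[m]$ be distinct, $r_j,r_\ell\in[0,1]$, and let $\mathbf{x}=(\mathbf{x}_1,\dots,\mathbf{x}_n)$ and $\mathbf{y}=(\mathbf{y}_1,\dots,\mathbf{y}_n)$ be Generalized Nash equilibria of $G^{(2)}$ with $\mathbf{x}_T^{(j)}=\mathbf{y}_T^{(j)}=r_j$ and $\mathbf{x}_T^{(\ell)}=\mathbf{y}_T^{(\ell)}=r_\ell$. If for some $i\in[n]$ it holds $0<x_{ij}<y_{ij}$ and $x_{i\ell}>y_{i\ell}>0$, then $\mathbf{x}_i$ is of Type I or $\mathbf{y}_i$ is of Type I.
   Context: $G^{(2)}$ is a Fragile multi-CPR Game with $n\ge1$ players and $m\ge1$ CPRs: $[k]=\{1,\dots,k\}$, $C_m=\{(x_1,\dots,x_m)\in[0,1]^m:\sum_j x_j\le1\}$, $\mathcal{C}_n=\prod_{i\in[n]}C_m$, $\mathcal{C}_{-i}=\prod_{[n]\setminus\{i\}}C_m$. A profile is $\mathbf{x}=(\mathbf{x}_1,\dots,\mathbf{x}_n)$, $\mathbf{x}_i=(x_{i1},\dots,x_{im})$; write $\mathbf{x}=(\mathbf{x}_i,\mathbf{x}_{-i})$; $\mathbf{x}_T^{(j)}=\sum_i x_{ij}$, $\mathbf{x}_T^{j|i}=\sum_{\ell'\ne i}x_{\ell' j}$. Each CPR $j$ has return rate $\mathcal{R}_j(t)>1$ and failure probability $p_j(t)\in[0,1]$; each player $i$ has parameters $a_i,k_i$. $\mathcal{F}_{ij}(t)=(\mathcal{R}_j(t)-1)^{a_i}(1-p_j(t))-k_ip_j(t)$;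 utility $\mathcal{V}_i(\mathbf{x}_i;\mathbf{x}_{-i})=\sum_j x_{ij}^{a_i}\mathcal{F}_{ij}(\mathbf{x}_T^{(j)})$. Assumption: (1) $p_j(0)=0$, $p_j(t)=1$ for $t\ge1$; (2) $a_i\in(0,1]$, $k_i>0$; (3) each $\mathcal{F}_{ij}$ (continuous on $[0,1]$) has strictly negative first and second derivatives on $(0,1)$. $\omega_{ij}\in(0,1)$ is the unique zero of $\mathcal{F}_{ij}$ in $(0,1)$. $A(\mathbf{x}_{-i})=\{j:\mathbf{x}_T^{j|i}<\omega_{ij}\}$. $\vartheta_i(\mathbf{x}_{-i})=C_m\cap\big(\prod_{j\in A(\mathbf{x}_{-i})}[0,\omega_{ij}-\mathbf{x}_T^{j|i}]\times\prod_{j\notin A(\mathbf{x}_{-i})}\{0\}\big)$. A Generalized Nash equilibrium is $\mathbf{x}\in\mathcal{C}_n$ with, for all $i$, $\mathbf{x}_i\in\vartheta_i(\mathbf{x}_{-i})$ and $\mathcal{V}_i(\mathbf{x}_i;\mathbf{x}_{-i})\ge\mathcal{V}_i(\mathbf{z};\mathbf{x}_{-i})$ for all $\mathbf{z}\in\vartheta_i(\mathbf{x}_{-i})$. $\psi_{ij}(x;s)=x\,\mathcal{F}_{ij}'(x+s)+a_i\mathcal{F}_{ij}(x+s)$. For a GNE $\mathbf{x}$: $J_{\mathbf{x}_{-i}}=\{j\in A(\mathbf{x}_{-i}):x_{ij}\ne0\}$; $\mathbf{x}_i$ is of Type I if $\sum_{j\in J_{\mathbf{x}_{-i}}}x_{ij}<1$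 and $\psi_{ij}(x_{ij};\mathbf{x}_T^{j|i})=0$ for all $j\in J_{\mathbf{x}_{-i}}$; of Type II if $\sum_{j\in J_{\mathbf{x}_{-i}}}x_{ij}=1$ and there is $\kappa_0\ge0$ with $x_{ij}^{a_i-1}\psi_{ij}(x_{ij};\mathbf{x}_T^{j|i})=\kappa_0$ for all $j\in J_{\mathbf{x}_{-i}}$. *)

From HB Require Import structures.
From mathcomp Require Import all_boot all_order all_algebra.
From mathcomp Require Import all_classical all_reals all_analysis.
Set Implicit Arguments. Unset Strict Implicit. Unset Printing Implicit Defensive.
Import Order.TTheory GRing.Theory Num.Theory.
Import numFieldNormedType.Exports.
Local Open Scope classical_set_scope.
Local Open Scope ring_scope.

(* A Fragile multi-CPR game G^(2) with n players ('I_n) and m CPRs ('I_m). *)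
Record cpr_game (R : realType) (n m : nat) := CprGame {
  Ret : 'I_m -> R -> R;
  pfail : 'I_m -> R -> R;
  ai : 'I_n -> R;
  ki : 'I_n -> R;
  omega : 'I_n -> 'I_m -> R      (* omega_ij, the zero of F_ij in (0,1) *)
}.

Section Game.
Context {R : realType} {n m : nat} (G : cpr_game R n m).

Definition Fij (i : 'I_n) (j : 'I_m) (t : R) : R :=
  ((Ret G j t - 1) `^ (ai G i)) * (1 - pfail G j t) - ki G i * pfail G j t.

(* Standing assumptions of the paper. omega_ij is recorded as a zero of F_ij
   in (0,1); under (3) it is the unique one. *)
Definition game_assumptions : Prop :=
  (forall j t, 0 <= t -> 1 < Ret G j t) /\
  (forall j t, 0 <= t -> 0 <= pfail G j t <= 1) /\
  (forall j, pfail G j 0 = 0) /\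
  (forall j t, 1 <= t -> pfail G j t = 1) /\
  (forall i, 0 < ai G i <= 1) /\
  (forall i, 0 < ki G i) /\
  (forall i j, {within `[0, 1], continuous (Fij i j)}) /\
  (forall i j t, 0 < t < 1 ->
     [/\ derivable (Fij i j) t 1, derive1 (Fij i j) t < 0,
         derivable (derive1 (Fij i j)) t 1 & derive1 (derive1 (Fij i j)) t < 0]) /\
  (forall i j, 0 < omega G i j < 1 /\ Fij i j (omega G i j) = 0).

Definition in_Cm (v : 'I_m -> R) : Prop :=
  (forall j, 0 <= v j <= 1) /\ \sum_(j < m) v j <= 1.

Definition in_Cn (x : 'I_n -> 'I_m -> R) : Prop := forall i, in_Cm (x i).

Definition totalT (x : 'I_n -> 'I_m -> R) (j : 'I_m) : R := \sum_(i < n) x i j.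

Definition total_except (x : 'I_n -> 'I_m -> R) (i : 'I_n) (j : 'I_m) : R :=
  \sum_(l < n | l != i) x l j.

Definition inA (x : 'I_n -> 'I_m -> R) (i : 'I_n) (j : 'I_m) : Prop :=
  total_except x i j < omega G i j.

Definition in_theta (x : 'I_n -> 'I_m -> R) (i : 'I_n) (z : 'I_m -> R) : Prop :=
  in_Cm z /\
  forall j, (inA x i j -> 0 <= z j <= omega G i j - total_except x i j) /\
            (~ inA x i j -> z j = 0).

Definition Vi (i : 'I_n) (z : 'I_m -> R) (x : 'I_n -> 'I_m -> R) : R :=
  \sum_(j < m) (z j `^ (ai G i)) * Fij i j (z j + total_except x i j).

Definition is_GNE (x : 'I_n -> 'I_m -> R) : Prop :=
  in_Cn x /\
  forall i, in_theta x i (x i) /\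
            forall z, in_theta x i z -> Vi i z x <= Vi i (x i) x.

Definition psi (i : 'I_n) (j : 'I_m) (xx s : R) : R :=
  xx * derive1 (Fij i j) (xx + s) + ai G i * Fij i j (xx + s).

Definition inJ (x : 'I_n -> 'I_m -> R) (i : 'I_n) (j : 'I_m) : Prop :=
  inA x i j /\ x i j != 0.

Definition sumJ (x : 'I_n -> 'I_m -> R) (i : 'I_n) : R :=
  \sum_(j < m | `[< inJ x i j >]) x i j.

Definition typeI (x : 'I_n -> 'I_m -> R) (i : 'I_n) : Prop :=
  sumJ x i < 1 /\
  forall j, inJ x i j -> psi i j (x i j) (total_except x i j) = 0.

Definition typeII (x : 'I_n -> 'I_m -> R) (i : 'I_n) : Prop :=
  sumJ x i = 1 /\
  exists kappa0 : R, 0 <= kappa0 /\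
    forall j, inJ x i j ->
      (x i j `^ (ai G i - 1)) * psi i j (x i j) (total_except x i j) = kappa0.

End Game.

From mathcomp Require Import all_boot all_order all_algebra.
From mathcomp Require Import all_classical all_reals all_analysis.
From mathcomp Require Import lra.
Set Implicit Arguments. Unset Strict Implicit. Unset Printing Implicit Defensive.
Import Order.TTheory GRing.Theory Num.Theory.
Local Open Scope ring_scope.

(* At an equilibrium, moving a small amount of player i's stake from resource l
   to resource j keeps its strategy feasible, so the marginal payoffs of i on j
   and on l coincide.  They are taken at the total uses r_j, r_l, which lie below
   omega: a player with positive stake on a resource whose total reached omega
   earns F(omega) = 0 there and gains by halving that stake.  At a fixed total
   r < omega the marginal payoff t^a F'(r) + a t^(a-1) F(r) strictly decreases in
   the own stake t, since F'(r) < 0 < F(r) and a <= 1.  As x and y share the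
   totals r_j and r_l, the assumed crossing of stakes gives
     m_j(x_ij) = m_l(x_il) < m_l(y_il) = m_j(y_ij) < m_j(x_ij),
   so the hypotheses are never met together, whatever the types of x_i, y_i. *)

Lemma big_dfwith (I : finType) (V : nmodType) (T : Type) (F : I -> T -> V)
    (w : I -> T) (j : I) (u : T) :
  \sum_(k : I) F k (dfwith w j u k) + F j (w j) = \sum_(k : I) F k (w k) + F j u.
Proof.
rewrite (bigD1 j) //= [in RHS](bigD1 j) //= dfwithin.
rewrite (eq_bigr (fun k => F k (w k))) => [|k /negbTE kj]; last by rewrite dfwithout // eq_sym kj.
by rewrite addrAC [in RHS]addrAC [F j u + _]addrC.
Qed.

Section Calculus.
Variable R : realType.
Implicit Types (f g : R -> R) (a d s t u v : R).

Lemma is_derive_shiftr f s t : derivable f (t + s) 1 ->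
  is_derive t 1 (fun t => f (t + s)) (derive1 f (t + s)).
Proof.
move=> /derivableP df; rewrite derive1E.
have := @is_derive1_comp _ f (shift s) t _ _ df (is_derive_shift t 1 s); rewrite mulr1.
exact.
Qed.

Lemma is_derive_shiftl f s t : derivable f (s - t) 1 ->
  is_derive t 1 (fun t => f (s - t)) (- derive1 f (s - t)).
Proof.
move=> /derivableP df; rewrite derive1E.
have dneg : is_derive t 1 (fun t : R => s - t) (-1).
  by have := is_deriveB (is_derive_cst s t 1) (is_derive_id t 1); rewrite sub0r.
have := @is_derive1_comp _ f (fun t => s - t) t _ _ df dneg; rewrite mulrN1.
exact.
Qed.

Lemma is_derive_powR_mul f a s t : 0 < t -> derivable f (t + s) 1 ->
  is_derive t 1 (fun t => t `^ a * f (t + s))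
    (t `^ a * derive1 f (t + s) + a * t `^ (a - 1) * f (t + s)).
Proof.
move=> t0 df.
apply: is_derive_eq (is_deriveM (is_derive1_powR a t0) (is_derive_shiftr df)) _.
by rewrite /GRing.scale /= [f _ * _]mulrC.
Qed.

Lemma derive1_eq_of_transfer_max f g u v d : 0 < d ->
  (forall e, -d < e < d -> derivable f (u + e) 1 /\ derivable g (v - e) 1) ->
  (forall e, -d < e < d -> f (u + e) + g (v - e) <= f u + g v) ->
  derive1 f u = derive1 g v.
Proof.
move=> d0 df dmax.
pose phi e := f (e + u) + g (v - e).
have phi_der e : -d < e < d -> is_derive e 1 phi (derive1 f (e + u) - derive1 g (v - e)).
  move=> /df[]; rewrite addrC => dfe dge.
  exact: is_deriveD (is_derive_shiftr dfe) (is_derive_shiftl dge).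
have : is_derive (0 : R) 1 phi 0.
  apply: (@derive1_at_max R phi (-d) d 0) => [|e||e]; rewrite ?in_itv /=.
  - lra.
  - by move/phi_der => [].
  - lra.
  - by move=> /dmax; rewrite /phi add0r subr0 [e + u]addrC.
move=> [_ phi'0]; case: (phi_der 0 ltac:(lra)) => _.
by rewrite phi'0 add0r subr0 => /eqP; rewrite eq_sym subr_eq0 => /eqP.
Qed.

End Calculus.

Section Game.
Variables (R : realType) (n m : nat) (G : cpr_game R n m).
Hypothesis HG : game_assumptions G.
Implicit Types (x : 'I_n -> 'I_m -> R) (i : 'I_n) (j k l : 'I_m) (w z : 'I_m -> R).

Lemma ai_bounds i : 0 < ai G i <= 1.
Proof. by case: HG => _ [_ [_ [_ [+ _]]]]. Qed.

Lemma omega_bounds i k : 0 < omega G i k < 1.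
Proof. by case: HG => _ [_ [_ [_ [_ [_ [_ [_ /(_ i k) []]]]]]]]. Qed.

Lemma Fij_omega i k : Fij G i k (omega G i k) = 0.
Proof. by case: HG => _ [_ [_ [_ [_ [_ [_ [_ /(_ i k) []]]]]]]]. Qed.

Lemma Fij_derivable i k t : 0 < t < 1 -> derivable (Fij G i k) t 1.
Proof. by case: HG => _ [_ [_ [_ [_ [_ [_ [+ _]]]]]]] => /(_ i k t) h /h []. Qed.

Lemma derive1_Fij_lt0 i k t : 0 < t < 1 -> derive1 (Fij G i k) t < 0.
Proof. by case: HG => _ [_ [_ [_ [_ [_ [_ [+ _]]]]]]] => /(_ i k t) h /h []. Qed.

Lemma Fij_decreasing i k s t : 0 <= s -> s < t -> t <= 1 -> Fij G i k t < Fij G i k s.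
Proof.
move=> s0 st t1; have [_ [_ [_ [_ [_ [_ [Fcont _]]]]]]] := HG.
have Fdecr := ltr0_derive1_lt_cc (@Fij_derivable i k) (@derive1_Fij_lt0 i k) (Fcont i k).
by apply: Fdecr; rewrite ?in_itv /= ?s0 ?t1 ?andbT //; lra.
Qed.

Lemma Fij_gt0 i k t : 0 <= t -> t < omega G i k -> 0 < Fij G i k t.
Proof.
move=> t0 tw; rewrite -(Fij_omega i k).
by apply: Fij_decreasing => //; case/andP: (omega_bounds i k) => _ /ltW.
Qed.

Lemma total_except_ge0 x i k : in_Cn x -> 0 <= total_except x i k.
Proof. by move=> hx; apply: sumr_ge0 => l _; case: (hx l) => /(_ k) /andP[]. Qed.

Lemma totalT_split x i k : totalT x k = x i k + total_except x i k.
Proof. by rewrite /totalT /total_except (bigD1 i). Qed.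

Lemma totalT_gt0 x i k : in_Cn x -> 0 < x i k -> 0 < totalT x k.
Proof. by move=> hx; have := total_except_ge0 i k hx; rewrite (totalT_split x i); lra. Qed.

Definition payoff x i k t := t `^ ai G i * Fij G i k (t + total_except x i k).

Lemma Vi_dfwith x i w k u :
  Vi G i (dfwith w k u) x + payoff x i k (w k) = Vi G i w x + payoff x i k u.
Proof. exact: big_dfwith (payoff x i) w k u. Qed.

Lemma GNE_pos_inA_le_omega x i k : is_GNE G x -> 0 < x i k ->
  inA G x i k /\ totalT x k <= omega G i k.
Proof.
case=> _ /(_ i) [[_ /(_ k) [xA xnA]] _] xk0.
have [hA|hA] := pselect (inA G x i k); last by move: xk0; rewrite (xnA hA) ltxx.
by split=> //; rewrite (totalT_split x i); case/andP: (xA hA) => _; lra.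
Qed.

Lemma in_theta_deviation x i z : is_GNE G x ->
  (forall k, z k != x i k ->
     [/\ inA G x i k, 0 <= z k & z k + total_except x i k <= omega G i k]) ->
  \sum_(k < m) z k <= \sum_(k < m) x i k -> in_theta G x i z.
Proof.
move=> hx hz hsum; have [[xiC xi_theta] _] := hx.2 i.
split; [split|] => [k||k].
- case: (eqVneq (z k) (x i k)) => [->|/hz [_ zk0 zkw]]; first exact: xiC.1.
  have [_ w1] := andP (omega_bounds i k); have := total_except_ge0 i k hx.1.
  by rewrite zk0 /=; lra.
- exact: le_trans hsum xiC.2.
- case: (eqVneq (z k) (x i k)) => [->|/hz [kA zk0 zkw]]; first exact: xi_theta.
  by split=> // _; rewrite zk0 /=; lra.
Qed.

Lemma GNE_totalT_lt_omega x i k : is_GNE G x -> 0 < x i k -> totalT x k < omega G i k.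
Proof.
move=> hx xk0; have [kA le_w] := GNE_pos_inA_le_omega hx xk0.
rewrite lt_neqAle le_w andbT; apply/eqP => tot_w.
have s0 := total_except_ge0 i k hx.1.
have split_k := totalT_split x i k.
pose z := dfwith (x i) k (x i k / 2).
have z_theta : in_theta G x i z.
  apply: in_theta_deviation => // [k'|].
    case: (eqVneq k k') => [<-|kk']; last by rewrite /z dfwithout // eqxx.
    by rewrite /z dfwithin => _; split=> //; lra.
  by have /= := big_dfwith (fun _ t => t) (x i) k (x i k / 2); lra.
have half_pos : 0 < payoff x i k (x i k / 2).
  by apply: mulr_gt0; [apply: powR_gt0 | apply: Fij_gt0]; lra.
have zero : payoff x i k (x i k) = 0.
  by rewrite /payoff -split_k tot_w Fij_omega mulr0.
have := (hx.2 i).2 z z_theta; have := Vi_dfwith x i (x i) k (x i k / 2).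
lra.
Qed.

(* [marginal i k (t + s) t = t ^ (a_i - 1) * psi i k t s], the quantity equated to
   kappa0 in a Type II strategy. *)
Definition marginal i k r t :=
  t `^ ai G i * derive1 (Fij G i k) r + ai G i * t `^ (ai G i - 1) * Fij G i k r.

Lemma is_derive_payoff x i k t : in_Cn x -> 0 < t -> t + total_except x i k < 1 ->
  is_derive t 1 (payoff x i k) (marginal i k (t + total_except x i k) t).
Proof.
move=> hx t0 t1; have s0 := total_except_ge0 i k hx.
have dF : derivable (Fij G i k) (t + total_except x i k) 1.
  by apply: Fij_derivable; apply/andP; split; lra.
exact: is_derive_powR_mul t0 dF.
Qed.

Lemma marginal_decreasing i k r s t : 0 < r -> r < omega G i k -> 0 < s -> s < t ->
  marginal i k r t < marginal i k r s.
Proof.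
move=> r0 rw s0 st; have t0 : 0 < t := lt_trans s0 st.
have [a0 a1] := andP (ai_bounds i); have [_ w1] := andP (omega_bounds i k).
have dF : derive1 (Fij G i k) r < 0 by apply: derive1_Fij_lt0; apply/andP; split; lra.
have F0 : 0 <= Fij G i k r by apply/ltW/Fij_gt0 => //; exact: ltW.
have pow_lt : s `^ ai G i < t `^ ai G i by apply: gt0_ltr_powR; rewrite ?nnegrE ?ltW.
have pow_le : t `^ (ai G i - 1) <= s `^ (ai G i - 1).
  rewrite -(opprB 1 (ai G i)) !powRN lef_pV2 ?posrE ?powR_gt0 //.
  by apply: ge0_ler_powR; rewrite ?nnegrE ?subr_ge0 // ltW.
apply: ltr_leD; first by rewrite ltr_nM2r.
by apply: ler_wpM2r => //; apply: ler_wpM2l => //; exact: ltW.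
Qed.

Lemma in_theta_transfer x i j l e : is_GNE G x -> j != l -> 0 < x i j -> 0 < x i l ->
  - x i j <= e -> e <= x i l ->
  totalT x j + e <= omega G i j -> totalT x l - e <= omega G i l ->
  in_theta G x i (dfwith (dfwith (x i) j (x i j + e)) l (x i l - e)).
Proof.
move=> hx jl xj0 xl0 ej el wj wl.
have [jA _] := GNE_pos_inA_le_omega hx xj0; have [lA _] := GNE_pos_inA_le_omega hx xl0.
have sj := totalT_split x i j; have sl := totalT_split x i l.
apply: in_theta_deviation => // [k|].
  case: (eqVneq l k) => [<-|lk]; first by rewrite dfwithin => _; split=> //; lra.
  rewrite dfwithout //; case: (eqVneq j k) => [<-|jk]; last by rewrite dfwithout // eqxx.
  by rewrite dfwithin => _; split=> //; lra.
have /= := big_dfwith (fun _ t => t) (dfwith (x i) j (x i j + e)) l (x i l - e).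
have /= := big_dfwith (fun _ t => t) (x i) j (x i j + e).
rewrite dfwithout //; lra.
Qed.

Lemma GNE_marginal_eq x i j l : is_GNE G x -> j != l -> 0 < x i j -> 0 < x i l ->
  marginal i j (totalT x j) (x i j) = marginal i l (totalT x l) (x i l).
Proof.
move=> hx jl xj0 xl0.
have wj := GNE_totalT_lt_omega hx xj0; have wl := GNE_totalT_lt_omega hx xl0.
have [_ wj1] := andP (omega_bounds i j); have [_ wl1] := andP (omega_bounds i l).
have sj0 := total_except_ge0 i j hx.1; have sl0 := total_except_ge0 i l hx.1.
have sj := totalT_split x i j; have sl := totalT_split x i l.
pose d := Num.min (Num.min (x i j) (x i l))
                  (Num.min (omega G i j - totalT x j) (omega G i l - totalT x l)).
have d0 : 0 < d by rewrite !lt_min xj0 xl0 !subr_gt0 wj wl.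
have [d1 d2 d3 d4] : [/\ d <= x i j, d <= x i l, d <= omega G i j - totalT x j
                       & d <= omega G i l - totalT x l] by rewrite !ge_min !lexx !orbT.
clearbody d.
have payoff_der k t : 0 < t -> t + total_except x i k < 1 ->
    derive1 (payoff x i k) t = marginal i k (t + total_except x i k) t.
  move=> t0 t1; rewrite derive1E; apply: derive_val; exact: is_derive_payoff hx.1 t0 t1.
rewrite sj sl -!payoff_der //; [|lra..].
apply: (derive1_eq_of_transfer_max d0) => e /andP[ed ed'].
  split; apply: ex_derive; apply: is_derive_payoff hx.1 _ _; lra.
have : Vi G i (dfwith (dfwith (x i) j (x i j + e)) l (x i l - e)) x <= Vi G i (x i) x.
  by apply: (hx.2 i).2; apply: in_theta_transfer => //; lra.
have := Vi_dfwith x i (dfwith (x i) j (x i j + e)) l (x i l - e).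
have := Vi_dfwith x i (x i) j (x i j + e).
rewrite dfwithout //; lra.
Qed.

End Game.

Theorem lemma12 (R : realType) (n m : nat) (G : cpr_game R n m)
  (HG : game_assumptions G)
  (j l : 'I_m) (hjl : j != l) (rj rl : R)
  (hrj : 0 <= rj <= 1) (hrl : 0 <= rl <= 1)
  (x y : 'I_n -> 'I_m -> R)
  (hx : is_GNE G x) (hy : is_GNE G y)
  (hxj : totalT x j = rj) (hyj : totalT y j = rj)
  (hxl : totalT x l = rl) (hyl : totalT y l = rl)
  (i : 'I_n)
  (hij : 0 < x i j < y i j) (hil : 0 < y i l < x i l) :
  typeI G x i \/ typeI G y i.
Proof.
exfalso.
have [xj0 xy_j] := andP hij; have [yl0 yx_l] := andP hil.
have yj0 := lt_trans xj0 xy_j; have xl0 := lt_trans yl0 yx_l.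
have := GNE_marginal_eq HG hx hjl xj0 xl0; rewrite hxj hxl.
have := GNE_marginal_eq HG hy hjl yj0 yl0; rewrite hyj hyl.
have rj0 : 0 < rj by rewrite -hxj (totalT_gt0 hx.1 xj0).
have rl0 : 0 < rl by rewrite -hxl (totalT_gt0 hx.1 xl0).
have rjw : rj < omega G i j by rewrite -hxj (GNE_totalT_lt_omega HG hx xj0).
have rlw : rl < omega G i l by rewrite -hxl (GNE_totalT_lt_omega HG hx xl0).
have := marginal_decreasing HG rj0 rjw xj0 xy_j.
have := marginal_decreasing HG rl0 rlw yl0 yx_l.
lra.
Qed.
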